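(* Consider the generalized one-way trading problem (GOT) with capacity $C$ and bounds $0<L\le U$, under Assumption A. If there exists an $\alpha$-competitive online algorithm for GOT, then there exists a non-decreasing function $\psi:[L,U]\to[0,C]$ satisfying $$L\psi(L)+\int_L^p u\,d\psi(u)\ge \frac{pC}{\alpha}\ \ \text{for all }p\in[L,U],\qquad \psi(L)\ge \frac{C}{\alpha},\qquad \psi(U)\le C,$$ where the integral is a Riemann–Stieltjes integral.
   Context: GOT: a single knapsack of capacity $C$; items $n=1,\dots,N$ arrive one at a time; item $n$ has size $D_n>0$ and value function $g_n:[0,D_n]\to\mathbb R_{\ge0}$, revealed on arrival. Offline problem: $\max\sum_n g_n(y_n)$ s.t. $\sum_n y_n\le C$, $0\le y_n\le D_n$. Assumption A: each $g_n$ is non-decreasing, differentiable, concave, $g_n(0)=0$, $L\le g_n'\le U$, with $C,L,U$ known. An online algorithm irrevocably chooses $y_n$ on arrival of item $n$ using only items $1,\dots,n$ and $C,L,U$, keeping the constraints feasible; it is $\alpha$-competitive if $\mathrm{OPT}(\mathcal I)\le\alpha\,\mathrm{ALG}(\mathcal I)$ for every instance $\mathcal I$ satisfying Assumption A. *)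

From Stdlib Require Import Reals Lra List.
Open Scope R_scope.

Fixpoint sumR (n : nat) (f : nat -> R) : R :=
  match n with O => 0 | S k => sumR k f + f k end.

(* An item: (size D_n, value function g_n).  An instance is a list of items,
   in arrival order; N = length of the list. *)
Definition item := (R * (R -> R))%type.
Definition instance := list item.
Definition default_item : item := (0, fun _ => 0).
Definition size_of (I : instance) (n : nat) : R := fst (nth n I default_item).
Definition val_of (I : instance) (n : nat) : R -> R := snd (nth n I default_item).

Definition has_deriv_on (g g' : R -> R) (D : R) : Prop :=
  forall y, 0 <= y <= D ->
  forall eps, 0 < eps -> exists delta, 0 < delta /\
    forall z, 0 <= z <= D -> z <> y -> Rabs (z - y) < delta ->
      Rabs ((g z - g y) / (z - y) - g' y) < eps.

Definition assumptionA_item (L U : R) (it : item) : Prop :=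
  let D := fst it in let g := snd it in
  0 < D /\
  g 0 = 0 /\
  (forall x y, 0 <= x -> x <= y -> y <= D -> g x <= g y) /\
  (forall x y t, 0 <= x <= D -> 0 <= y <= D -> 0 <= t <= 1 ->
      t * g x + (1 - t) * g y <= g (t * x + (1 - t) * y)) /\
  (exists g' : R -> R, has_deriv_on g g' D /\
      forall y, 0 <= y <= D -> L <= g' y <= U).

Definition assumptionA (L U : R) (I : instance) : Prop :=
  forall it, In it I -> assumptionA_item L U it.

Definition feasible (C : R) (I : instance) (y : nat -> R) : Prop :=
  (forall n, (n < length I)%nat -> 0 <= y n <= size_of I n) /\
  sumR (length I) y <= C.

Definition objective (I : instance) (y : nat -> R) : R :=
  sumR (length I) (fun n => val_of I n (y n)).

(* A deterministic online algorithm (for fixed known C, L, U): on arrival of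
   item n it sees the items 1..n (the prefix of length n+1) and returns y_n.
   Irrevocability and the online information constraint are built in. *)
Definition online_alg := instance -> R.

Definition alg_decisions (A : online_alg) (I : instance) : nat -> R :=
  fun n => A (firstn (S n) I).

Definition ALG (A : online_alg) (I : instance) : R := objective I (alg_decisions A I).

(* alpha-competitive: always feasible on instances satisfying Assumption A, and
   OPT(I) <= alpha * ALG(I), where OPT(I) = sup of objective over feasible y
   (stated as: every feasible y has objective <= alpha * ALG(I)). *)
Definition competitive (C L U alpha : R) (A : online_alg) : Prop :=
  (forall I, assumptionA L U I -> feasible C I (alg_decisions A I)) /\
  (forall I, assumptionA L U I ->
     forall y, feasible C I y -> objective I y <= alpha * ALG A I).

Definition tagged_partition (a b : R) (n : nat) (x t : nat -> R) : Prop :=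
  x O = a /\ x n = b /\
  forall i, (i < n)%nat -> x i <= t i <= x (S i).

Definition RS_sum (f psi : R -> R) (n : nat) (x t : nat -> R) : R :=
  sumR n (fun i => f (t i) * (psi (x (S i)) - psi (x i))).

Definition is_RS_integral (f psi : R -> R) (a b I : R) : Prop :=
  forall eps, 0 < eps -> exists delta, 0 < delta /\
    forall n x t, tagged_partition a b n x t ->
      (forall i, (i < n)%nat -> x (S i) - x i < delta) ->
      Rabs (RS_sum f psi n x t - I) < eps.

From Stdlib Require Import Reals Lra Lia List.
Open Scope R_scope.

(* Feed the algorithm items of size C with linear values at the prices
   L = v_0 < v_1 < ... < v_m = U, each instance a prefix of the next.  Against
   the offline optimum C v_k of the k-th prefix, a discrete potential argument
   forces alpha >= 1 + sum_i (1 - v_i / v_(i+1)), a Riemann sum of the integral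
   of du/u over [L, U]; refining the grid gives alpha >= 1 + ln (U / L).  Then
   psi u = (C / alpha) (1 + ln (u / L)) works: the integral of u dpsi(u) over
   [L, p] is (C / alpha) (p - L), so L psi L plus it is exactly p C / alpha,
   and psi U <= C is the bound on alpha. *)

Lemma ln_le x y : 0 < x -> x <= y -> ln x <= ln y.
Proof.
  intros Hx Hxy. destruct (Rle_lt_or_eq_dec x y Hxy) as [Hlt | ->].
  - left. apply ln_increasing; assumption.
  - lra.
Qed.

Lemma ln_le_sub_1 x : 0 < x -> ln x <= x - 1.
Proof.
  intros Hx. rewrite <- (ln_exp (x - 1)).
  apply ln_le; [exact Hx |]. pose proof (exp_ineq1_le (x - 1)). lra.
Qed.

Lemma ln_sub_le a b : 0 < a -> 0 < b -> ln b - ln a <= (b - a) / a.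
Proof.
  intros Ha Hb.
  assert (Hba : 0 < b / a) by (apply Rdiv_lt_0_compat; assumption).
  replace b with (a * (b / a)) at 1 by (field; lra).
  rewrite ln_mult by assumption.
  replace ((b - a) / a) with (b / a - 1) by (field; lra).
  pose proof (ln_le_sub_1 _ Hba). lra.
Qed.

Lemma ln_sub_bounds a b : 0 < a -> 0 < b ->
  (b - a) / b <= ln b - ln a <= (b - a) / a.
Proof.
  intros Ha Hb. split; [| exact (ln_sub_le a b Ha Hb)].
  pose proof (ln_sub_le b a Hb Ha).
  replace ((b - a) / b) with (- ((a - b) / b)) by (field; lra). lra.
Qed.

Lemma one_sub_div_ge_ln_sub a b : 0 < a -> 0 < b ->
  ln b - ln a - (b - a) * (b - a) / (a * b) <= 1 - a / b.
Proof.
  intros Ha Hb. pose proof (ln_sub_le a b Ha Hb).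
  replace (1 - a / b) with ((b - a) / a - (b - a) * (b - a) / (a * b))
    by (field; lra).
  lra.
Qed.

Lemma sumR_ext n f g :
  (forall i, (i < n)%nat -> f i = g i) -> sumR n f = sumR n g.
Proof.
  induction n as [| n IH]; simpl; intros H; [reflexivity |].
  rewrite IH by (intros; apply H; lia). rewrite H by lia. reflexivity.
Qed.

Lemma sumR_zero n f : (forall i, (i < n)%nat -> f i = 0) -> sumR n f = 0.
Proof.
  induction n as [| n IH]; simpl; intros H; [reflexivity |].
  rewrite IH by (intros; apply H; lia). rewrite H by lia. ring.
Qed.

Lemma sumR_sub n f g : sumR n (fun i => f i - g i) = sumR n f - sumR n g.
Proof. induction n as [| n IH]; simpl; [ring | rewrite IH; ring]. Qed.

Lemma sumR_scal_l c n f : sumR n (fun i => c * f i) = c * sumR n f.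
Proof. induction n as [| n IH]; simpl; [ring | rewrite IH; ring]. Qed.

Lemma sumR_telescope n x : sumR n (fun i => x (S i) - x i) = x n - x O.
Proof. induction n as [| n IH]; simpl; [ring | rewrite IH; ring]. Qed.

Lemma sumR_abs_le n f g :
  (forall i, (i < n)%nat -> Rabs (f i) <= g i) -> Rabs (sumR n f) <= sumR n g.
Proof.
  induction n as [| n IH]; simpl; intros H.
  - rewrite Rabs_R0. lra.
  - eapply Rle_trans; [apply Rabs_triang |].
    apply Rplus_le_compat; [apply IH; intros; apply H; lia | apply H; lia].
Qed.

Lemma firstn_seq s a b : firstn a (seq s b) = seq s (Nat.min a b).
Proof.
  revert s b. induction a as [| a IH]; intros s b; simpl; [reflexivity |].
  destruct b; simpl; [reflexivity |]. f_equal. apply IH.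
Qed.

Lemma le_of_forall_sub_div_INR x y K :
  (forall m, (0 < m)%nat -> x - K / INR m <= y) -> x <= y.
Proof.
  intros H. destruct (Rle_or_lt x y) as [Hle | Hlt]; [exact Hle | exfalso].
  assert (He : 0 < (x - y) / (Rabs K + 1)).
  { apply Rdiv_lt_0_compat; [lra |]. pose proof (Rabs_pos K). lra. }
  destruct (archimed_cor1 _ He) as [m [Hm Hm0]].
  pose proof (H m Hm0) as Hy.
  assert (Hinv : 0 < / INR m) by (apply Rinv_0_lt_compat, lt_0_INR; exact Hm0).
  assert (HK : K / INR m <= (Rabs K + 1) * / INR m).
  { apply Rmult_le_compat_r; [lra |]. pose proof (Rle_abs K). lra. }
  assert (Hlt' : (Rabs K + 1) * / INR m < (Rabs K + 1) * ((x - y) / (Rabs K + 1))).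
  { apply Rmult_lt_compat_l; [pose proof (Rabs_pos K) |]; lra. }
  replace ((Rabs K + 1) * ((x - y) / (Rabs K + 1))) with (x - y) in Hlt'
    by (field; pose proof (Rabs_pos K); lra).
  lra.
Qed.

Lemma tagged_partition_ge_start a b n x t :
  tagged_partition a b n x t -> forall i, (i <= n)%nat -> a <= x i.
Proof.
  intros [Hx0 [_ Htag]] i. induction i as [| i IH]; intros Hi; [lra |].
  pose proof (Htag i ltac:(lia)). pose proof (IH ltac:(lia)). lra.
Qed.

Lemma is_RS_integral_affine f psi psi' a b I k c :
  (forall u, psi' u = k + c * psi u) ->
  is_RS_integral f psi a b I -> is_RS_integral f psi' a b (c * I).
Proof.
  intros Hpsi HI eps Heps.
  assert (Hc : 0 < Rabs c + 1) by (pose proof (Rabs_pos c); lra).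
  destruct (HI (eps / (Rabs c + 1)) ltac:(apply Rdiv_lt_0_compat; lra))
    as [delta [Hdelta Hsum]].
  exists delta. split; [exact Hdelta |]. intros n x t Hpart Hmesh.
  assert (E : RS_sum f psi' n x t = c * RS_sum f psi n x t).
  { unfold RS_sum. rewrite <- sumR_scal_l. apply sumR_ext. intros i _.
    rewrite !Hpsi. ring. }
  rewrite E.
  replace (c * RS_sum f psi n x t - c * I) with (c * (RS_sum f psi n x t - I)) by ring.
  rewrite Rabs_mult.
  pose proof (Hsum n x t Hpart Hmesh) as Hlt.
  pose proof (Rabs_pos c). pose proof (Rabs_pos (RS_sum f psi n x t - I)).
  apply Rle_lt_trans with ((Rabs c + 1) * Rabs (RS_sum f psi n x t - I)); [nra |].
  apply (Rmult_lt_compat_l (Rabs c + 1)) in Hlt; [| exact Hc].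
  replace ((Rabs c + 1) * (eps / (Rabs c + 1))) with eps in Hlt by (field; lra).
  exact Hlt.
Qed.

Lemma ln_increment_error x y t : 0 < x -> x <= t <= y ->
  Rabs (t * (ln y - ln x) - (y - x)) <= (y - x) * (y - x) / x.
Proof.
  intros Hx Ht.
  destruct (ln_sub_bounds x y Hx ltac:(lra)) as [Hlo Hhi].
  set (d := ln y - ln x) in *.
  assert (Hd : 0 <= d).
  { eapply Rle_trans; [| exact Hlo]. apply Rle_mult_inv_pos; lra. }
  assert (Hsq : 0 <= (y - x) * (y - x) / y <= (y - x) * (y - x) / x).
  { split; [apply Rle_mult_inv_pos; nra |].
    unfold Rdiv. apply Rmult_le_compat_l; [nra |]. apply Rinv_le_contravar; lra. }
  apply Rabs_le. split.
  - assert (x * ((y - x) / y) <= t * d).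
    { apply Rle_trans with (x * d); [apply Rmult_le_compat_l; lra |].
      apply Rmult_le_compat_r; lra. }
    replace (x * ((y - x) / y)) with ((y - x) - (y - x) * (y - x) / y) in *
      by (field; lra).
    lra.
  - assert (t * d <= y * ((y - x) / x)).
    { apply Rle_trans with (y * d); [apply Rmult_le_compat_r; lra |].
      apply Rmult_le_compat_l; lra. }
    replace (y * ((y - x) / x)) with ((y - x) + (y - x) * (y - x) / x) in *
      by (field; lra).
    lra.
Qed.

Lemma is_RS_integral_id_ln a b :
  0 < a -> a <= b -> is_RS_integral (fun u => u) ln a b (b - a).
Proof.
  intros Ha Hab eps Heps.
  set (delta := eps * a / (b - a + 1)).
  assert (Hdelta : 0 < delta).
  { apply Rdiv_lt_0_compat; [apply Rmult_lt_0_compat |]; lra. }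
  exists delta. split; [exact Hdelta |]. intros n x t Hpart Hmesh.
  pose proof (tagged_partition_ge_start a b n x t Hpart) as Hge.
  destruct Hpart as [Hx0 [Hxn Htag]].
  assert (Herr : Rabs (RS_sum (fun u => u) ln n x t - (b - a))
                 <= sumR n (fun i => delta / a * (x (S i) - x i))).
  { unfold RS_sum.
    replace (b - a) with (sumR n (fun i => x (S i) - x i))
      by (rewrite sumR_telescope; lra).
    rewrite <- sumR_sub. apply sumR_abs_le. intros i Hi.
    pose proof (Htag i Hi). pose proof (Hmesh i Hi). pose proof (Hge i ltac:(lia)).
    eapply Rle_trans; [apply ln_increment_error; lra |].
    set (dx := x (S i) - x i).
    apply Rle_trans with (dx * dx / a).
    - unfold Rdiv. apply Rmult_le_compat_l; [unfold dx; nra |].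
      apply Rinv_le_contravar; lra.
    - replace (delta / a * dx) with (delta * dx / a) by (field; lra).
      unfold Rdiv. apply Rmult_le_compat_r; [left; apply Rinv_0_lt_compat; lra |].
      unfold dx. nra. }
  rewrite sumR_scal_l, sumR_telescope, Hxn, Hx0 in Herr.
  eapply Rle_lt_trans; [exact Herr |].
  replace (delta / a * (b - a)) with (eps * ((b - a) / (b - a + 1)))
    by (unfold delta; field; lra).
  assert ((b - a) / (b - a + 1) < 1).
  { apply (Rmult_lt_reg_r (b - a + 1)); [lra |].
    replace ((b - a) / (b - a + 1) * (b - a + 1)) with (b - a) by (field; lra). lra. }
  nra.
Qed.

Section Potential.
Variables (v a : nat -> R) (C alpha : R) (m : nat).
Hypothesis v_pos : forall k, 0 < v k.
Hypothesis v_le_succ : forall k, v k <= v (S k).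

Definition revenue k := sumR (S k) (fun j => v j * a j).
Definition spent k := sumR (S k) a.
Definition log_riemann_sum k := sumR k (fun i => 1 - v i / v (S i)).

Hypothesis revenue_competitive :
  forall k, (k <= m)%nat -> v k * C <= alpha * revenue k.

(* In the step, competitiveness at the old price (alpha * revenue k >= v k * C)
   makes the drop of alpha * revenue k / v from v k to v (S k) worth at least
   C (1 - v k / v (S k)); the new item's revenue and spending cancel. *)
Lemma potential_le_spent k :
  (k <= m)%nat -> alpha * revenue k / v k + C * log_riemann_sum k <= alpha * spent k.
Proof.
  induction k as [| k IH]; intros Hk.
  - unfold revenue, spent, log_riemann_sum. simpl. pose proof (v_pos 0). field_simplify; lra.
  - pose proof (IH ltac:(lia)) as IHk. pose proof (revenue_competitive k ltac:(lia)).
    pose proof (v_pos k). pose proof (v_pos (S k)). pose proof (v_le_succ k).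
    change (spent (S k)) with (spent k + a (S k)).
    change (revenue (S k)) with (revenue k + v (S k) * a (S k)).
    change (log_riemann_sum (S k)) with (log_riemann_sum k + (1 - v k / v (S k))).
    assert (Hinv : 0 <= / v k - / v (S k)).
    { assert (/ v (S k) <= / v k) by (apply Rinv_le_contravar; lra). lra. }
    assert (Hgain : 0 <= (alpha * revenue k - v k * C) * (/ v k - / v (S k)))
      by (apply Rmult_le_pos; lra).
    replace ((alpha * revenue k - v k * C) * (/ v k - / v (S k))) with
      (alpha * revenue k / v k - alpha * revenue k / v (S k) - C + C * (v k / v (S k)))
      in Hgain by (field; lra).
    replace (alpha * (revenue k + v (S k) * a (S k)) / v (S k)) with
      (alpha * revenue k / v (S k) + alpha * a (S k)) by (field; lra).
    lra.
Qed.

Lemma ratio_ge_log_riemann_sum :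
  0 < C -> 0 <= a 0 -> spent m <= C -> 0 < alpha /\ 1 + log_riemann_sum m <= alpha.
Proof.
  intros HC Ha0 Hspent.
  assert (Halpha : 0 < alpha).
  { pose proof (revenue_competitive 0 ltac:(lia)) as H0.
    unfold revenue in H0. simpl in H0. pose proof (v_pos 0).
    destruct (Rle_or_lt alpha 0) as [Hneg |]; [exfalso | assumption].
    assert (0 <= - alpha * (v 0 * a 0)) by (apply Rmult_le_pos; nra).
    assert (0 < v 0 * C) by (apply Rmult_lt_0_compat; assumption).
    lra. }
  split; [exact Halpha |].
  pose proof (potential_le_spent m ltac:(lia)).
  pose proof (revenue_competitive m ltac:(lia)). pose proof (v_pos m).
  assert (C <= alpha * revenue m / v m).
  { apply (Rmult_le_reg_r (v m)); [assumption |].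
    replace (alpha * revenue m / v m * v m) with (alpha * revenue m) by (field; lra).
    lra. }
  assert (alpha * spent m <= alpha * C) by (apply Rmult_le_compat_l; lra).
  apply (Rmult_le_reg_l C); [assumption |]. lra.
Qed.
End Potential.

Definition price_grid (L h : R) (k : nat) : R := L + INR k * h.

Lemma price_grid_ge L h k : 0 <= h -> L <= price_grid L h k.
Proof. intros Hh. unfold price_grid. pose proof (pos_INR k). nra. Qed.

Lemma price_grid_le_succ L h k : 0 <= h -> price_grid L h k <= price_grid L h (S k).
Proof. intros Hh. unfold price_grid. rewrite S_INR. lra. Qed.

Lemma log_riemann_sum_price_grid L h k : 0 < L -> 0 <= h ->
  ln (price_grid L h k) - ln L - INR k * (h * h / (L * L))
  <= log_riemann_sum (price_grid L h) k.
Proof.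
  intros HL Hh. induction k as [| k IH].
  - unfold log_riemann_sum, price_grid. simpl. rewrite Rmult_0_l, Rplus_0_r. lra.
  - change (log_riemann_sum (price_grid L h) (S k)) with
      (log_riemann_sum (price_grid L h) k
       + (1 - price_grid L h k / price_grid L h (S k))).
    pose proof (price_grid_ge L h k Hh). pose proof (price_grid_ge L h (S k) Hh).
    assert (Hstep : price_grid L h (S k) - price_grid L h k = h)
      by (unfold price_grid; rewrite S_INR; ring).
    pose proof (one_sub_div_ge_ln_sub (price_grid L h k) (price_grid L h (S k))
                  ltac:(lra) ltac:(lra)) as Hterm.
    rewrite Hstep in Hterm.
    assert (h * h / (price_grid L h k * price_grid L h (S k)) <= h * h / (L * L)).
    { unfold Rdiv. apply Rmult_le_compat_l; [nra |]. apply Rinv_le_contravar; nra. }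
    rewrite S_INR. lra.
Qed.

Lemma assumptionA_linear L U D v :
  0 <= L -> 0 < D -> L <= v <= U -> assumptionA_item L U (D, fun y => v * y).
Proof.
  intros HL HD Hv. unfold assumptionA_item; simpl. repeat split.
  - exact HD.
  - ring.
  - intros x y Hx Hxy Hy. nra.
  - intros x y t _ _ _. right. ring.
  - exists (fun _ => v). split; [| intros; lra].
    intros y Hy eps Heps. exists 1. split; [lra |]. intros z Hz Hzy _.
    replace ((v * z - v * y) / (z - y) - v) with 0
      by (field; intro; apply Hzy; lra).
    rewrite Rabs_R0. exact Heps.
Qed.

Section Adversary.
Variables (C L U alpha : R) (A : online_alg) (m : nat).
Hypotheses (hC : 0 < C) (hL : 0 < L) (hLU : L <= U) (hm : (0 < m)%nat).

Definition price : nat -> R := price_grid L ((U - L) / INR m).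
Definition price_item (k : nat) : item := (C, fun y => price k * y).
Definition price_instance (n : nat) : instance := map price_item (seq 0 n).
Definition decision (k : nat) : R := A (price_instance (S k)).

Lemma price_step_nonneg : 0 <= (U - L) / INR m.
Proof. apply Rle_mult_inv_pos; [lra | apply lt_0_INR; exact hm]. Qed.

Lemma price_ge k : L <= price k.
Proof. apply price_grid_ge, price_step_nonneg. Qed.

Lemma price_le k : (k <= m)%nat -> price k <= U.
Proof.
  intros Hk. unfold price, price_grid.
  pose proof (le_INR _ _ Hk). pose proof (lt_0_INR m hm).
  replace (INR k * ((U - L) / INR m)) with ((U - L) * (INR k / INR m)) by (field; lra).
  assert (INR k / INR m <= 1).
  { apply (Rmult_le_reg_r (INR m)); [lra |].
    replace (INR k / INR m * INR m) with (INR k) by (field; lra). lra. }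
  assert (0 <= INR k / INR m) by (apply Rle_mult_inv_pos; [apply pos_INR | lra]).
  nra.
Qed.

Lemma price_last : price m = U.
Proof. unfold price, price_grid. pose proof (lt_0_INR m hm). field. lra. Qed.

Lemma price_instance_length n : length (price_instance n) = n.
Proof. unfold price_instance. rewrite length_map, length_seq. reflexivity. Qed.

Lemma price_instance_nth n j : (j < n)%nat ->
  nth j (price_instance n) default_item = price_item j.
Proof.
  intros Hj.
  rewrite nth_indep with (d' := price_item 0)
    by (rewrite price_instance_length; exact Hj).
  unfold price_instance. rewrite map_nth, seq_nth by exact Hj. reflexivity.
Qed.

Lemma assumptionA_price_instance n : (n <= S m)%nat -> assumptionA L U (price_instance n).
Proof.
  intros Hn it Hin. unfold price_instance in Hin. apply in_map_iff in Hin.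
  destruct Hin as [k [<- Hk]]. apply in_seq in Hk.
  apply assumptionA_linear; [lra | exact hC |].
  split; [apply price_ge | apply price_le; lia].
Qed.

Lemma alg_decisions_price_instance n j : (j < n)%nat ->
  alg_decisions A (price_instance n) j = decision j.
Proof.
  intros Hj. unfold alg_decisions, decision, price_instance.
  rewrite firstn_map, firstn_seq. do 3 f_equal. lia.
Qed.

Lemma ALG_price_instance k : ALG A (price_instance (S k)) = revenue price decision k.
Proof.
  unfold ALG, objective, revenue. rewrite price_instance_length.
  apply sumR_ext. intros i Hi.
  rewrite alg_decisions_price_instance by exact Hi.
  unfold val_of. rewrite price_instance_nth by exact Hi. reflexivity.
Qed.

Hypothesis hA : competitive C L U alpha A.

Lemma decisions_feasible : spent decision m <= C /\ 0 <= decision 0.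
Proof.
  destruct hA as [Hfeas _].
  destruct (Hfeas _ (assumptionA_price_instance (S m) (le_n _))) as [Hbox Hsum].
  rewrite price_instance_length in Hbox, Hsum. split.
  - unfold spent. erewrite <- sumR_ext; [exact Hsum |].
    intros; apply alg_decisions_price_instance; assumption.
  - rewrite <- (alg_decisions_price_instance (S m)) by lia. apply Hbox. lia.
Qed.

(* Offline, the whole capacity goes to the last (most valuable) item. *)
Lemma revenue_competitive_prefix k :
  (k <= m)%nat -> price k * C <= alpha * revenue price decision k.
Proof.
  intros Hk. destruct hA as [_ Hopt].
  set (y := fun n => if Nat.eqb n k then C else 0).
  assert (Hy_lt : forall i, (i < k)%nat -> y i = 0).
  { intros i Hi. unfold y. replace (Nat.eqb i k) with false; [reflexivity |].
    symmetry. apply Nat.eqb_neq. lia. }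
  assert (Hy_k : y k = C) by (unfold y; rewrite Nat.eqb_refl; reflexivity).
  assert (Hy : feasible C (price_instance (S k)) y).
  { split; rewrite price_instance_length.
    - intros n Hn. unfold size_of. rewrite price_instance_nth by exact Hn. simpl.
      unfold y. destruct (Nat.eqb n k); lra.
    - simpl. rewrite (sumR_zero k y Hy_lt), Hy_k. lra. }
  pose proof (Hopt _ (assumptionA_price_instance (S k) ltac:(lia)) y Hy) as H.
  rewrite ALG_price_instance in H. unfold objective in H.
  rewrite price_instance_length in H. simpl in H.
  rewrite sumR_zero in H.
  - unfold val_of in H. rewrite price_instance_nth in H by lia. simpl in H.
    rewrite Hy_k in H. lra.
  - intros i Hi. unfold val_of. rewrite price_instance_nth by lia. simpl.
    rewrite Hy_lt by exact Hi. ring.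
Qed.

Lemma competitive_ratio_ge_grid :
  0 < alpha /\ 1 + (ln U - ln L) - (U - L) * (U - L) / (L * L) / INR m <= alpha.
Proof.
  destruct decisions_feasible as [Hspent Hdec0].
  destruct (ratio_ge_log_riemann_sum price decision C alpha m
              (fun k => Rlt_le_trans _ _ _ hL (price_ge k))
              (fun k => price_grid_le_succ _ _ k price_step_nonneg)
              revenue_competitive_prefix hC Hdec0 Hspent) as [Halpha Hbound].
  split; [exact Halpha |].
  pose proof (log_riemann_sum_price_grid L ((U - L) / INR m) m hL price_step_nonneg) as Hgrid.
  fold price in Hgrid. rewrite price_last in Hgrid.
  replace (INR m * ((U - L) / INR m * ((U - L) / INR m) / (L * L)))
    with ((U - L) * (U - L) / (L * L) / INR m) in Hgrid
    by (pose proof (lt_0_INR m hm); field; lra).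
  lra.
Qed.
End Adversary.

Lemma competitive_ratio_ge_log C L U alpha A :
  0 < C -> 0 < L -> L <= U -> competitive C L U alpha A ->
  0 < alpha /\ 1 + (ln U - ln L) <= alpha.
Proof.
  intros hC hL hLU hA. split.
  - exact (proj1 (competitive_ratio_ge_grid C L U alpha A 1 hC hL hLU ltac:(lia) hA)).
  - apply (le_of_forall_sub_div_INR _ _ ((U - L) * (U - L) / (L * L))).
    intros m hm. exact (proj2 (competitive_ratio_ge_grid C L U alpha A m hC hL hLU hm hA)).
Qed.

Theorem lemma2 (C L U alpha : R) (hC : 0 < C) (hL : 0 < L) (hLU : L <= U) :
  (exists A : online_alg, competitive C L U alpha A) ->
  exists psi : R -> R,
    (forall x y, L <= x -> x <= y -> y <= U -> psi x <= psi y) /\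
    (forall u, L <= u <= U -> 0 <= psi u <= C) /\
    (forall p, L <= p <= U ->
       exists I, is_RS_integral (fun u => u) psi L p I /\
                 L * psi L + I >= p * C / alpha) /\
    psi L >= C / alpha /\
    psi U <= C.
Proof.
  intros [A hA].
  destruct (competitive_ratio_ge_log C L U alpha A hC hL hLU hA) as [Halpha Hratio].
  set (c := C / alpha).
  assert (Hc : 0 < c) by (apply Rdiv_lt_0_compat; assumption).
  assert (HcU : c * (1 + ln U - ln L) <= C).
  { apply Rle_trans with (c * alpha); [apply Rmult_le_compat_l; lra |].
    right. unfold c. field. lra. }
  exists (fun u => c * (1 + ln u - ln L)).
  split; [| split; [| split; [| split]]].
  - intros x y Hx Hxy Hy. pose proof (ln_le x y ltac:(lra) Hxy).
    apply Rmult_le_compat_l; lra.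
  - intros u [HLu HuU]. pose proof (ln_le L u hL HLu). pose proof (ln_le u U ltac:(lra) HuU).
    split; [nra |].
    apply Rle_trans with (c * (1 + ln U - ln L)); [apply Rmult_le_compat_l |]; lra.
  - intros p [Hp _]. exists (c * (p - L)). split.
    + apply (is_RS_integral_affine _ ln _ _ _ _ (c * (1 - ln L)) c);
        [intros; ring | apply is_RS_integral_id_ln; lra].
    + apply Req_ge. unfold c. field. lra.
  - apply Req_ge. ring.
  - exact HcU.
Qed.
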